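(* Let $G$ be a connected graph with $n\ge 4$ vertices and $m=e(G)\ge n$ edges. If $R(G)>\sqrt{n-1}+\frac{2m-2n+2}{n\sqrt{n-1}}$, then $\frac{q(G)}{R(G)}<\frac{n}{\sqrt{n-1}}$.
   Context: All graphs are finite and simple; $e(G)$ is the number of edges. For a vertex $u$, $d(u)$ is its degree. The Randić index is $R(G)=\sum_{\{u,v\}\in E(G)} \frac{1}{\sqrt{d(u)d(v)}}$. The signless Laplacian is $Q=D+A$ ($D$ the diagonal degree matrix, $A$ the adjacency matrix), and $q(G)$ is its largest eigenvalue. *)

From HB Require Import structures.
From mathcomp Require Import all_boot all_order all_algebra.
Set Implicit Arguments. Unset Strict Implicit. Unset Printing Implicit Defensive.
Import Order.TTheory GRing.Theory Num.Theory.
Local Open Scope ring_scope.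

Definition simple_graph (n : nat) (e : rel 'I_n) : Prop :=
  symmetric e /\ irreflexive e.

Definition connected_graph (n : nat) (e : rel 'I_n) : Prop :=
  forall x y : 'I_n, connect e x y.

Definition deg (n : nat) (e : rel 'I_n) (u : 'I_n) : nat := #|[set v | e u v]|.

Definition edges (n : nat) (e : rel 'I_n) : {set {set 'I_n}} :=
  [set [set p.1; p.2] | p in [set p : 'I_n * 'I_n | e p.1 p.2]].

Definition num_edges (n : nat) (e : rel 'I_n) : nat := #|edges e|.

(* Randić index: sum over edges {u,v} of 1/sqrt(d(u)d(v)); each unordered
   edge is counted twice in the ordered double sum, hence the factor 1/2. *)
Definition randic (R : rcfType) (n : nat) (e : rel 'I_n) : R :=
  2^-1 * \sum_(u < n) \sum_(v < n | e u v)
          (Num.sqrt ((deg e u)%:R * (deg e v)%:R))^-1.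

Definition signless_laplacian (R : rcfType) (n : nat) (e : rel 'I_n) : 'M[R]_n :=
  \matrix_(i, j) (((i == j) * deg e i)%:R + (e i j)%:R).

Definition is_signless_spectral_radius (R : rcfType) (n : nat) (e : rel 'I_n) (q : R) : Prop :=
  eigenvalue (signless_laplacian R e) q /\
  forall a : R, eigenvalue (signless_laplacian R e) a -> a <= q.

From HB Require Import structures.
From mathcomp Require Import all_boot all_order all_algebra.
From mathcomp Require Import zify lra.
Import Order.TTheory GRing.Theory Num.Theory.
Set Implicit Arguments. Unset Strict Implicit. Unset Printing Implicit Defensive.

(* Take an eigenvector x for q and a vertex i maximising |x_i|/d_i. The i-th
   row of Q x = q x gives q <= d_i + S_i/d_i, where S_i is the sum of the
   degrees of the neighbours of i. Since S_i <= d_i (n-1) and, every vertex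
   having degree at least 1, S_i + (n-1) <= 2m, this yields the bound
   q <= 2m/(n-1) + n - 2. The hypothesis on R(G) says exactly that
   n R(G)/sqrt(n-1) exceeds this bound. *)

Definition nbhd_deg_sum (n : nat) (e : rel 'I_n) (i : 'I_n) : nat :=
  \sum_(j | e i j) deg e j.

Lemma connected_deg_gt0 (n : nat) (e : rel 'I_n) :
  connected_graph e -> (2 <= n)%N -> forall u, (0 < deg e u)%N.
Proof.
move=> e_conn n_ge2 u.
have : (0 < #|[set~ u]|)%N by rewrite cardsC1 card_ord; lia.
case/card_gt0P => v; rewrite !inE => vu.
case/connectP: (e_conn u v) => [[|w p]] /=; first by move=> _ vE; rewrite vE eqxx in vu.
by case/andP => uw _ _; rewrite /deg card_gt0; apply/set0Pn; exists w; rewrite inE.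
Qed.

Section Degrees.
Variables (n : nat) (e : rel 'I_n).
Hypothesis e_irr : irreflexive e.

Lemma deg_le_pred j : (deg e j <= n.-1)%N.
Proof.
have -> : n.-1 = #|[set~ j]| by rewrite cardsC1 card_ord.
apply/subset_leq_card/subsetP => v.
by rewrite !inE; apply: contraTneq => ->; rewrite e_irr.
Qed.

Lemma sum_deg_le_num_edges : (\sum_u deg e u <= 2 * num_edges e)%N.
Proof.
pose P := [set p : 'I_n * 'I_n | e p.1 p.2].
have -> : (\sum_u deg e u = #|P|)%N.
  rewrite -sum1_card.
  transitivity (\sum_(u | true) \sum_(v | e u v) 1)%N.
    by apply: eq_bigr => u _; rewrite /deg -sum1_card; apply: eq_bigl => v; rewrite inE.
  by rewrite pair_big_dep; apply: eq_bigl => p; rewrite inE.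
(* an edge {a, b} together with the bit a < b determines the pair (a, b) *)
pose f (p : 'I_n * 'I_n) := ([set p.1; p.2], (p.1 < p.2)%N).
have f_inj : {in P &, injective f}.
  move=> [a b] [c d]; rewrite !inE /= => eab ecd [] abE lt_ab.
  have ab : a != b by apply: contraTneq eab => ->; rewrite e_irr.
  have cd : c != d by apply: contraTneq ecd => ->; rewrite e_irr.
  have a_cd : a \in [set c; d] by rewrite -abE setU11.
  have b_cd : b \in [set c; d] by rewrite -abE setU1r ?set11.
  have c_ab : c \in [set a; b] by rewrite abE setU11.
  rewrite !inE in a_cd b_cd c_ab.
  move: a_cd b_cd c_ab ab cd lt_ab => /orP[]/eqP-> /orP[]/eqP-> //; rewrite ?eqxx //=.
  by move=> _ _ cd; case: ltngtP => // /val_inj dc; rewrite dc eqxx in cd.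
rewrite -(card_in_imset f_inj) mulnC -card_bool -cardsT -cardsX.
apply/subset_leq_card/subsetP => _ /imsetP[p pP ->].
by rewrite !inE andbT; apply/imsetP; exists p.
Qed.

Lemma nbhd_deg_sum_le_mul i : (nbhd_deg_sum e i <= deg e i * n.-1)%N.
Proof.
rewrite /deg -sum1_card big_distrl /= (eq_bigl (e i)) => [|v]; last by rewrite inE.
by apply: leq_sum => j _; rewrite mul1n deg_le_pred.
Qed.

Lemma nbhd_deg_sum_add_le (deg_gt0 : forall u, (0 < deg e u)%N) i :
  (nbhd_deg_sum e i + n.-1 <= 2 * num_edges e)%N.
Proof.
apply: leq_trans sum_deg_le_num_edges.
pose N := [set v | e i v].
have iN : i \notin N by rewrite inE e_irr.
rewrite (bigID (mem (i |: N))) /= big_setU1 //=.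
have -> : (\sum_(j in N) deg e j = nbhd_deg_sum e i)%N.
  by apply: eq_bigl => j; rewrite inE.
set T := (\sum_(j | _) _)%N.
(* every vertex outside the closed neighbourhood of i contributes at least 1 *)
have rest : (#|~: (i |: N)| <= T)%N.
  rewrite -sum1_card (eq_bigl (fun j => j \notin i |: N)) => [|j]; last by rewrite inE.
  by apply: leq_sum => j _; exact: deg_gt0.
have := cardsC (i |: N); rewrite cardsU1 iN card_ord /=.
have : (0 < #|N|)%N := deg_gt0 i.
rewrite /deg -/N -subn1; move: #|N| #|~: (i |: N)| T rest => a b t; lia.
Qed.

End Degrees.

Local Open Scope ring_scope.

Lemma sqr_add_le_of_deg_bounds (R : realDomainType) (d S N M : R) :
  0 <= d -> d <= N -> S <= d * N -> S + N <= M ->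
  N * (d ^+ 2 + S) <= d * (M + N * (N - 1)).
Proof.
move=> d_ge0 d_leN S_le S_add_le.
have N_d_ge0 : 0 <= N - d by rewrite subr_ge0.
(* use S <= d N when d N + N <= M, and S <= M - N otherwise *)
have [M_ge | M_lt] := lerP (d * N + N) M; first by nra.
have : (N - d) * M <= (N - d) * (d * N + N) by rewrite ler_wpM2l // ltW.
nra.
Qed.

Section SignlessSpectrum.
Variables (R : rcfType) (n : nat) (e : rel 'I_n).
Hypothesis e_sym : symmetric e.

Lemma signless_laplacian_row (v : 'rV[R]_n) i :
  (v *m signless_laplacian R e) 0 i = (deg e i)%:R * v 0 i + \sum_(j | e i j) v 0 j.
Proof.
rewrite mxE; under eq_bigr => j _ do rewrite mxE natrM mulrDr.
rewrite big_split /= (bigD1 i) //= eqxx mul1r big1 ?addr0 => [|j /negbTE ->]; last first.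
  by rewrite mul0r mulr0.
rewrite mulrC; congr (_ + _); rewrite [RHS]big_mkcond; apply: eq_bigr => j _ /=.
by rewrite e_sym; case: (e i j); rewrite ?mulr1 ?mulr0.
Qed.

Hypothesis deg_gt0 : forall u, (0 < deg e u)%N.

Lemma signless_eigenvalue_le_deg q :
  eigenvalue (signless_laplacian R e) q ->
  exists i, q * (deg e i)%:R <= (deg e i)%:R ^+ 2 + (nbhd_deg_sum e i)%:R.
Proof.
case/eigenvalueP => v v_eig v_neq0.
have [j0 vj0_neq0] : exists j, v 0 j != 0.
  apply/existsP; move: v_neq0; apply: contraR; rewrite negb_exists => /forallP v0.
  by apply/eqP/matrixP => a b; rewrite ord1 mxE; apply/eqP/negbNE/v0.
have d_gt0 j : 0 < (deg e j)%:R :> R by rewrite ltr0n.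
pose y j := `|v 0 j| / (deg e j)%:R.
have vy j : `|v 0 j| = (deg e j)%:R * y j by rewrite mulrC divfK ?gt_eqF.
case: (@arg_maxP _ R _ j0 xpredT y isT) => i _ y_max.
have y_gt0 : 0 < y i.
  by apply: lt_le_trans (y_max j0 isT); rewrite divr_gt0 ?normr_gt0.
have eig_i : (q - (deg e i)%:R) * v 0 i = \sum_(j | e i j) v 0 j.
  move/matrixP/(_ 0 i): v_eig; rewrite signless_laplacian_row mxE mulrBl => <-.
  by rewrite addrAC subrr add0r.
(* at a maximiser of y, each |v_j| with j ~ i is at most d_j y_i *)
have : `|q - (deg e i)%:R| * (deg e i)%:R * y i <= (nbhd_deg_sum e i)%:R * y i.
  rewrite -mulrA -vy -normrM eig_i natr_sum mulr_suml.
  apply: le_trans (ler_norm_sum _ _ _) _; apply: ler_sum => j _.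
  by rewrite vy; apply: ler_wpM2l; [exact: ltW | exact: y_max].
rewrite ler_pM2r // => abs_le.
exists i; have := ler_norm (q - (deg e i)%:R); have := d_gt0 i.
move: abs_le; set d := (deg e i)%:R; set a := `|_|; nra.
Qed.

Hypothesis e_irr : irreflexive e.

Lemma signless_eigenvalue_le q :
  eigenvalue (signless_laplacian R e) q ->
  q * (n.-1)%:R <= 2 * (num_edges e)%:R + (n.-1)%:R * ((n.-1)%:R - 1).
Proof.
case/signless_eigenvalue_le_deg => i q_le.
have d_gt0 : 0 < (deg e i)%:R :> R by rewrite ltr0n.
have d_le : (deg e i)%:R <= (n.-1)%:R :> R by rewrite ler_nat deg_le_pred.
have S_le : (nbhd_deg_sum e i)%:R <= (deg e i)%:R * (n.-1)%:R :> R.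
  by rewrite -natrM ler_nat nbhd_deg_sum_le_mul.
have S_add_le : (nbhd_deg_sum e i)%:R + (n.-1)%:R <= 2 * (num_edges e)%:R :> R.
  by rewrite -natrD -[2]/(2%:R) -natrM ler_nat nbhd_deg_sum_add_le.
have := sqr_add_le_of_deg_bounds (ltW d_gt0) d_le S_le S_add_le.
have N_ge0 : 0 <= (n.-1)%:R :> R by [].
have := ler_wpM2l N_ge0 q_le.
rewrite -(ler_pM2r d_gt0); nra.
Qed.

End SignlessSpectrum.

Lemma ratio_lt_of_lower_bound (R : rcfType) (N M q r : R) :
  0 < N -> N <= M -> q * N <= 2 * M + N * (N - 1) ->
  Num.sqrt N + (2 * M - 2 * (N + 1) + 2) / ((N + 1) * Num.sqrt N) < r ->
  q / r < (N + 1) / Num.sqrt N.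
Proof.
move=> N_gt0 N_leM q_le; set s := Num.sqrt N => r_gt.
have s_gt0 : 0 < s by rewrite sqrtr_gt0.
have ss : s * s = N by rewrite -expr2 sqr_sqrtr // ltW.
have Ns_gt0 : 0 < (N + 1) * s by rewrite mulr_gt0 // ltr_wpDl // ltW.
have r_gt0 : 0 < r.
  apply: le_lt_trans r_gt; apply: addr_ge0; first exact: ltW.
  by apply: divr_ge0; [lra | exact: ltW].
have lower : N * (N - 1) + 2 * M < (N + 1) * s * r.
  rewrite -(ltr_pM2l Ns_gt0) mulrDr -mulrA ss in r_gt.
  by apply: le_lt_trans r_gt; rewrite [(N + 1) * s * _]mulrC divfK ?gt_eqF //; lra.
rewrite (ltr_pdivrMr _ _ r_gt0) mulrAC (ltr_pdivlMr _ _ s_gt0) -(ltr_pM2r s_gt0).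
nra.
Qed.

Theorem lemma2p4 (R : rcfType) (n : nat) (e : rel 'I_n) (q : R) :
  simple_graph e -> connected_graph e -> (4 <= n)%N ->
  (n <= num_edges e)%N ->
  is_signless_spectral_radius e q ->
  randic R e > Num.sqrt ((n - 1)%:R) +
     (2 * (num_edges e)%:R - 2 * n%:R + 2) / (n%:R * Num.sqrt ((n - 1)%:R)) ->
  q / randic R e < n%:R / Num.sqrt ((n - 1)%:R).
Proof.
move=> [e_sym e_irr] e_conn n_ge4 n_le_m [q_eig _].
have deg_gt0 := connected_deg_gt0 e_conn (leq_trans (isT : (2 <= 4)%N) n_ge4).
have q_le := signless_eigenvalue_le e_sym deg_gt0 e_irr q_eig.
have nE : n%:R = (n.-1)%:R + 1 :> R by rewrite natr1 prednK // (leq_trans _ n_ge4).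
rewrite subn1 nE; apply: ratio_lt_of_lower_bound q_le.
- by rewrite ltr0n; lia.
- by rewrite ler_nat; lia.
Qed.
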